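(* Let $(\bar\xi,\bar x)\in\widetilde\Omega\cap\operatorname{gph}E$ be a local solution to (MPEC). Suppose that: (i) $\varphi$ is locally Lipschitz around $(\bar\xi,\bar x)$; (ii) $\operatorname{gph}E$ is closed; (iii) $\widetilde\Omega$ and $\operatorname{gph}E$ are subtransversal at $(\bar\xi,\bar x)$; (iv) a uniform error bound holds around $(\bar\xi,\bar x)$, i.e. there exist $\delta,\gamma>0$ such that $\operatorname{dist}(x,E(\xi))\le\mathfrak m(\xi,x)/\gamma$ for all $(\xi,x)\in\mathbb B(\bar\xi,\delta)\times\mathbb B(\bar x,\delta)$. Then there exists $\lambda>0$ such that $(\bar\xi,\bar x)$ is a local (unconstrained) minimizer of $$(\xi,x)\mapsto \varphi(\xi,x)+\lambda\Big(\operatorname{dist}(\xi,\Omega)+\frac{\mathfrak m(\xi,x)}{\gamma}\Big).$$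
   Context: $C\subset\mathbb R^m$ nontrivial closed convex pointed cone; $f:\mathbb R^p\times\mathbb R^n\times\mathbb R^n\to\mathbb R^m$; $K:\mathbb R^p\rightrightarrows\mathbb R^n$ has closed graph and nonempty values everywhere. VEP($\xi$): find $x\in K(\xi)$ with $f(\xi,x,z)\in C$ for all $z\in K(\xi)$; $E(\xi)$ is its solution set (with $\operatorname{dist}(x,\emptyset)=+\infty$). $\nu(\xi,x)=\sup_{z\in K(\xi)}\operatorname{dist}(f(\xi,x,z),C)$, $\mu(\xi,x)=\operatorname{dist}(x,K(\xi))$, $\mathfrak m=\nu+\mu$. (MPEC): minimize $\varphi(\xi,x)$ subject to $x\in E(\xi)$, $\xi\in\Omega$, where $\varphi:\mathbb R^p\times\mathbb R^n\to\mathbb R$ and $\Omega\subseteq\mathbb R^p$ is closed; $\widetilde\Omega=\Omega\times\mathbb R^n$. Two sets $S_1,S_2$ are subtransversal at $\bar s\in S_1\cap S_2$ if there exist $\alpha,\delta>0$ such that $(S_1+\alpha\rho\mathbb B)\cap(S_2+\alpha\rho\mathbb B)\cap\mathbb B(\bar s,\delta)\subseteq(S_1\cap S_2)+\rho\mathbb B$ for all $\rho\in[0,\delta)$; equivalently, there exist $\kappa,r>0$ with $\operatorname{dist}(w,S_1\cap S_2)\le\kappa\max\{\operatorname{dist}(w,S_1),\operatorname{dist}(w,S_2)\}$ for all $w\in\mathbb B(\bar s,r)$. *)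

From HB Require Import structures.
From mathcomp Require Import all_boot all_order all_algebra.
From mathcomp Require Import all_classical all_reals ereal.
Set Implicit Arguments. Unset Strict Implicit. Unset Printing Implicit Defensive.
Import Order.TTheory GRing.Theory Num.Theory.
Local Open Scope classical_set_scope.
Local Open Scope ring_scope.

Section Defs.
Variable R : realType.

Definition enorm (n : nat) (v : 'rV[R]_n) : R := Num.sqrt (\sum_(i < n) v ord0 i ^+ 2).

Definition pnorm (p n : nat) (w : 'rV[R]_p * 'rV[R]_n) : R :=
  Num.sqrt (enorm w.1 ^+ 2 + enorm w.2 ^+ 2).

(* distance to a set, in the extended reals; dist(x, emptyset) = +oo *)
Definition dist (n : nat) (x : 'rV[R]_n) (S : set 'rV[R]_n) : \bar R :=
  ereal_inf [set (enorm (x - s))%:E | s in S].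

Definition pdist (p n : nat) (w : 'rV[R]_p * 'rV[R]_n)
    (S : set ('rV[R]_p * 'rV[R]_n)) : \bar R :=
  ereal_inf [set (pnorm (w.1 - s.1, w.2 - s.2))%:E | s in S].

Definition eclosed (n : nat) (S : set 'rV[R]_n) : Prop :=
  forall x, (forall e : R, 0 < e -> exists2 s, S s & enorm (x - s) < e) -> S x.

Definition pclosed (p n : nat) (S : set ('rV[R]_p * 'rV[R]_n)) : Prop :=
  forall w, (forall e : R, 0 < e ->
     exists2 s, S s & pnorm (w.1 - s.1, w.2 - s.2) < e) -> S w.

Definition nontrivial_closed_convex_pointed_cone (m : nat) (C : set 'rV[R]_m) : Prop :=
  [/\ (exists c, C c) /\ (exists c, C c /\ c <> 0),
      eclosed C,
      (forall c t, C c -> 0 <= t -> C (t *: c)),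
      (forall c d t, C c -> C d -> 0 <= t <= 1 -> C (t *: c + (1 - t) *: d)) &
      (forall c, C c -> C (- c) -> c = 0)].

Definition graph (p n : nat) (K : 'rV[R]_p -> set 'rV[R]_n) : set ('rV[R]_p * 'rV[R]_n) :=
  [set w | K w.1 w.2].

Definition VEPsol (p n m : nat) (C : set 'rV[R]_m)
    (f : 'rV[R]_p -> 'rV[R]_n -> 'rV[R]_n -> 'rV[R]_m)
    (K : 'rV[R]_p -> set 'rV[R]_n) (xi : 'rV[R]_p) : set 'rV[R]_n :=
  [set x | K xi x /\ forall z, K xi z -> C (f xi x z)].

Definition nu_fun (p n m : nat) (C : set 'rV[R]_m)
    (f : 'rV[R]_p -> 'rV[R]_n -> 'rV[R]_n -> 'rV[R]_m)
    (K : 'rV[R]_p -> set 'rV[R]_n) (xi : 'rV[R]_p) (x : 'rV[R]_n) : \bar R :=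
  ereal_sup [set dist (f xi x z) C | z in K xi].

Definition mu_fun (p n : nat) (K : 'rV[R]_p -> set 'rV[R]_n)
    (xi : 'rV[R]_p) (x : 'rV[R]_n) : \bar R := dist x (K xi).

Definition merit (p n m : nat) (C : set 'rV[R]_m)
    (f : 'rV[R]_p -> 'rV[R]_n -> 'rV[R]_n -> 'rV[R]_m)
    (K : 'rV[R]_p -> set 'rV[R]_n) (xi : 'rV[R]_p) (x : 'rV[R]_n) : \bar R :=
  (nu_fun C f K xi x + mu_fun K xi x)%E.

Definition penlarge (p n : nat) (S : set ('rV[R]_p * 'rV[R]_n)) (r : R)
    : set ('rV[R]_p * 'rV[R]_n) :=
  [set w | exists2 s, S s & pnorm (w.1 - s.1, w.2 - s.2) <= r].

Definition pball (p n : nat) (c : 'rV[R]_p * 'rV[R]_n) (r : R)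
    : set ('rV[R]_p * 'rV[R]_n) :=
  [set w | pnorm (w.1 - c.1, w.2 - c.2) <= r].

Definition subtransversal (p n : nat) (S1 S2 : set ('rV[R]_p * 'rV[R]_n))
    (s : 'rV[R]_p * 'rV[R]_n) : Prop :=
  exists alpha delta : R, 0 < alpha /\ 0 < delta /\
    forall rho : R, 0 <= rho -> rho < delta ->
      penlarge S1 (alpha * rho) `&` penlarge S2 (alpha * rho) `&` pball s delta
        `<=` penlarge (S1 `&` S2) rho.

Definition locally_lipschitz (p n : nat) (phi : 'rV[R]_p -> 'rV[R]_n -> R)
    (w0 : 'rV[R]_p * 'rV[R]_n) : Prop :=
  exists L r : R, 0 < r /\ forall u v,
    pnorm (u.1 - w0.1, u.2 - w0.2) < r -> pnorm (v.1 - w0.1, v.2 - w0.2) < r ->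
    `|phi u.1 u.2 - phi v.1 v.2| <= L * pnorm (u.1 - v.1, u.2 - v.2).

End Defs.

(** The penalty dominates the distances of (xi, x) to both sets
    Omega~ = Omega x R^n and gph E: dist(xi, Omega) bounds the first, and the
    uniform error bound (iv) bounds the second by m(xi, x) / gamma. If both
    distances are at most c, subtransversality (iii) yields a point s of
    Omega~ /\ gph E within c / alpha of (xi, x); local optimality and the
    Lipschitz property of phi then give
    phi(xib, xb) <= phi(s) <= phi(xi, x) + L c / alpha.  So lambda = L / alpha
    (plus any margin) is an exact penalty parameter. *)
From mathcomp Require Import all_boot all_order all_algebra.
From mathcomp Require Import all_classical all_reals ereal.
From mathcomp Require Import lra.
Import Order.TTheory GRing.Theory Num.Theory.
Local Open Scope classical_set_scope.
Local Open Scope ring_scope.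

Set Implicit Arguments. Unset Strict Implicit.

Section Norms.
Variable R : realType.

Lemma enorm_ge0 k (v : 'rV[R]_k) : 0 <= enorm v.
Proof. exact: sqrtr_ge0. Qed.

Lemma enorm_sqr k (v : 'rV[R]_k) : enorm v ^+ 2 = \sum_(i < k) v ord0 i ^+ 2.
Proof. by rewrite /enorm sqr_sqrtr // sumr_ge0 // => i _; rewrite sqr_ge0. Qed.

Lemma enormN k (v : 'rV[R]_k) : enorm (- v) = enorm v.
Proof. by rewrite /enorm; congr Num.sqrt; apply: eq_bigr => i _; rewrite mxE sqrrN. Qed.

Lemma enorm0 k : enorm (0 : 'rV[R]_k) = 0.
Proof. by rewrite /enorm big1 ?sqrtr0 // => i _; rewrite mxE expr0n. Qed.

Lemma enormD_sqr_le k (u v : 'rV[R]_k) :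
  enorm (u + v) ^+ 2 <= 2 * enorm u ^+ 2 + 2 * enorm v ^+ 2.
Proof.
rewrite !enorm_sqr !mulr_sumr -big_split /=; apply: ler_sum => i _.
rewrite mxE; set x := u ord0 i; set y := v ord0 i.
have := sqr_ge0 (x - y); rewrite !expr2; nra.
Qed.

Lemma pnorm_ge0 p n (w : 'rV[R]_p * 'rV[R]_n) : 0 <= pnorm w.
Proof. exact: sqrtr_ge0. Qed.

Lemma pnorm_sqr p n (w : 'rV[R]_p * 'rV[R]_n) :
  pnorm w ^+ 2 = enorm w.1 ^+ 2 + enorm w.2 ^+ 2.
Proof. by rewrite /pnorm sqr_sqrtr // addr_ge0 // sqr_ge0. Qed.

Lemma pnormN p n (a : 'rV[R]_p) (b : 'rV[R]_n) : pnorm (- a, - b) = pnorm (a, b).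
Proof. by rewrite /pnorm /= !enormN. Qed.

Lemma pnorm_snd0 p n (a : 'rV[R]_p) : pnorm (a, (0 : 'rV[R]_n)) = enorm a.
Proof. by rewrite /pnorm /= enorm0 expr0n addr0 sqrtr_sqr ger0_norm // enorm_ge0. Qed.

Lemma pnorm_fst0 p n (b : 'rV[R]_n) : pnorm ((0 : 'rV[R]_p), b) = enorm b.
Proof. by rewrite /pnorm /= enorm0 expr0n add0r sqrtr_sqr ger0_norm // enorm_ge0. Qed.

Lemma pnorm_le_sqrt p n (w : 'rV[R]_p * 'rV[R]_n) (x : R) :
  0 <= x -> pnorm w ^+ 2 <= x ^+ 2 -> pnorm w <= x.
Proof. by move=> x0; rewrite -ler_sqrt ?sqr_ge0 // !sqrtr_sqr !ger0_norm // pnorm_ge0. Qed.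

Lemma enorm_fst_le_pnorm p n (a : 'rV[R]_p) (b : 'rV[R]_n) : enorm a <= pnorm (a, b).
Proof.
rewrite -[enorm a](ger0_norm (enorm_ge0 a)) -sqrtr_sqr ler_sqrt ?addr_ge0 ?sqr_ge0 //.
by rewrite lerDl sqr_ge0.
Qed.

Lemma enorm_snd_le_pnorm p n (a : 'rV[R]_p) (b : 'rV[R]_n) : enorm b <= pnorm (a, b).
Proof.
rewrite -[enorm b](ger0_norm (enorm_ge0 b)) -sqrtr_sqr ler_sqrt ?addr_ge0 ?sqr_ge0 //.
by rewrite lerDr sqr_ge0.
Qed.

(* The factor 2 (instead of the sharp 1) spares us Cauchy-Schwarz; any
   constant is good enough for a local argument. *)
Lemma pnormD_le p n (u1 v1 : 'rV[R]_p) (u2 v2 : 'rV[R]_n) :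
  pnorm (u1 + v1, u2 + v2) <= 2 * (pnorm (u1, u2) + pnorm (v1, v2)).
Proof.
have h1 := pnorm_ge0 (u1, u2); have h2 := pnorm_ge0 (v1, v2).
apply: pnorm_le_sqrt; first by rewrite mulr_ge0 // addr_ge0.
have e1 := enormD_sqr_le u1 v1; have e2 := enormD_sqr_le u2 v2.
have q1 := pnorm_sqr (u1, u2); have q2 := pnorm_sqr (v1, v2).
rewrite pnorm_sqr /=; nra.
Qed.

End Norms.

Section ProductMetric.
Variables (R : realType) (p n : nat).
Implicit Types (u v w s : 'rV[R]_p * 'rV[R]_n) (S : set ('rV[R]_p * 'rV[R]_n)).

Definition pmetric u v : R := pnorm (u.1 - v.1, u.2 - v.2).

Lemma pmetric_ge0 u v : 0 <= pmetric u v.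
Proof. exact: pnorm_ge0. Qed.

Lemma pmetricC u v : pmetric u v = pmetric v u.
Proof. by rewrite /pmetric -pnormN !opprB. Qed.

Lemma pmetric_le2 u v w : pmetric u w <= 2 * (pmetric u v + pmetric v w).
Proof.
rewrite /pmetric -[u.1 - w.1](subrKA v.1) -[u.2 - w.2](subrKA v.2).
exact: pnormD_le.
Qed.

Lemma pdist_ge0 w S : (0 <= pdist w S)%E.
Proof. by apply/ereal_infP => _ [s _ <-]; rewrite lee_fin pnorm_ge0. Qed.

Lemma pdist_le_pmetric w S s : S s -> (pdist w S <= (pmetric w s)%:E)%E.
Proof. by move=> Ss; apply: ge_ereal_inf; exists (pmetric w s)%:E => //; exists s. Qed.

Lemma pdist_le_witness w S c eta : (pdist w S <= c%:E)%E -> 0 < eta ->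
  exists2 s, S s & pmetric w s < c + eta.
Proof.
move=> wSc eta0; have : (pdist w S < (c + eta)%:E)%E.
  by apply: le_lt_trans wSc _; rewrite lte_fin ltrDl.
by move=> /ereal_inf_lt [_ [s Ss <-]]; rewrite lte_fin; exists s.
Qed.

Definition local_minimizer_on S (phi : 'rV[R]_p -> 'rV[R]_n -> R) w :=
  exists2 r : R, 0 < r & forall s, S s -> pmetric s w < r -> phi w.1 w.2 <= phi s.1 s.2.

End ProductMetric.

Section Distances.
Variable R : realType.

Lemma dist_ge0 k (x : 'rV[R]_k) S : (0 <= dist x S)%E.
Proof. by apply/ereal_infP => _ [s _ <-]; rewrite lee_fin enorm_ge0. Qed.

Lemma dist_mem k (x : 'rV[R]_k) (S : set _) : S x -> dist x S = 0%E.
Proof.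
move=> Sx; apply/eqP; rewrite eq_le dist_ge0 andbT.
by apply: ge_ereal_inf; exists 0%E => //; exists x; rewrite // subrr enorm0.
Qed.

Lemma pdist_fst_le p n (xi : 'rV[R]_p) (x : 'rV[R]_n) (A : set 'rV[R]_p) :
  (pdist (xi, x) [set w | A w.1] <= dist xi A)%E.
Proof.
apply: ereal_inf_le_tmp => _ [o Ao <-]; exists (o, x) => //=.
by rewrite subrr pnorm_snd0.
Qed.

Lemma pdist_graph_le p n (K : 'rV[R]_p -> set 'rV[R]_n) xi x :
  (pdist (xi, x) (graph K) <= dist x (K xi))%E.
Proof.
apply: ereal_inf_le_tmp => _ [e Ke <-]; exists (xi, e) => //=.
by rewrite subrr pnorm_fst0.
Qed.

Lemma VEPsol_merit_eq0 p n m (C : set 'rV[R]_m) f (K : 'rV[R]_p -> set 'rV[R]_n) xi x :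
  VEPsol C f K xi x -> merit C f K xi x = 0%E.
Proof.
move=> [Kx fC]; have nu0 : nu_fun C f K xi x = 0%E.
  apply/eqP; rewrite eq_le; apply/andP; split.
    by apply/ereal_supP => _ [z Kz <-]; rewrite dist_mem //; apply: fC.
  by apply: le_ereal_sup_tmp; exists 0%E => //; exists x; rewrite // dist_mem //; apply: fC.
by rewrite /merit nu0 /mu_fun dist_mem // adde0.
Qed.

End Distances.

Lemma ler_add_scaled_eps (R : realFieldType) (x y c r : R) : 0 < r -> 0 <= c ->
  (forall eta, 0 < eta -> eta < r -> x <= y + c * eta) -> x <= y.
Proof.
move=> r0 c0 H; apply/ler_addgt0Pr => e e0.
set eta := Num.min (r / 2) (e / (c + 1)).
have eta_r2 : eta <= r / 2 by rewrite ge_min lexx.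
have eta_e : eta * (c + 1) <= e by rewrite -ler_pdivlMr ?ge_min ?lexx ?orbT //; lra.
have eta0 : 0 < eta by rewrite lt_min !divr_gt0 //; lra.
have := H eta eta0 (le_lt_trans eta_r2 _); nra.
Qed.

Section ExactPenalty.
Variables (R : realType) (p n : nat).
Variables (S1 S2 : set ('rV[R]_p * 'rV[R]_n)) (phi : 'rV[R]_p -> 'rV[R]_n -> R).
Variable wb : 'rV[R]_p * 'rV[R]_n.
Variables (L rL r0 alpha delta : R).
Hypotheses (L0 : 0 <= L) (rL0 : 0 < rL) (r00 : 0 < r0) (alpha0 : 0 < alpha)
  (delta0 : 0 < delta).
Hypothesis phi_lip : forall u v, pmetric u wb < rL -> pmetric v wb < rL ->
  `|phi u.1 u.2 - phi v.1 v.2| <= L * pmetric u v.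
Hypothesis wb_min : forall s, S1 s -> S2 s -> pmetric s wb < r0 ->
  phi wb.1 wb.2 <= phi s.1 s.2.
Hypothesis S12_subtr : forall rho, 0 <= rho -> rho < delta ->
  penlarge S1 (alpha * rho) `&` penlarge S2 (alpha * rho) `&` pball wb delta
    `<=` penlarge (S1 `&` S2) rho.

Definition penalty_scale : R := Num.min (Num.min r0 rL) delta.
Local Notation B := penalty_scale.
Definition penalty_radius : R := Num.min B (B * alpha) / 8.
Local Notation radius := penalty_radius.

Let B_gt0 : 0 < B. Proof. by rewrite !lt_min r00 rL0 delta0. Qed.

Lemma penalty_radius_gt0 : 0 < radius.
Proof. by rewrite divr_gt0 // lt_min B_gt0 mulr_gt0. Qed.

Lemma penalty_bound_near_points (c : R) (w s1 s2 : 'rV[R]_p * 'rV[R]_n) :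
  pmetric w wb < radius -> 0 <= c -> c < 2 * radius ->
  S1 s1 -> S2 s2 -> pmetric w s1 <= c -> pmetric w s2 <= c ->
  phi wb.1 wb.2 <= phi w.1 w.2 + L / alpha * c.
Proof.
move=> w_near c0 c_small S1s1 S2s2 ws1 ws2.
have rB : 8 * radius <= B by rewrite mulrC divfK // ge_min lexx.
have rBa : 8 * radius <= B * alpha by rewrite mulrC divfK // ge_min lexx orbT.
have [Br0 BrL Bde] : [/\ B <= r0, B <= rL & B <= delta].
  by rewrite !ge_min !lexx !orbT.
set rho := c / alpha.
have alpha_rho : alpha * rho = c by rewrite mulrC divfK // gt_eqF.
have rho0 : 0 <= rho by rewrite divr_ge0 // ltW.
have c_lt : c < B * alpha / 4 by lra.
have rho_small : rho < B / 4 by rewrite ltr_pdivrMr // mulrAC.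
have w_mem : (penlarge S1 (alpha * rho) `&` penlarge S2 (alpha * rho)
    `&` pball wb delta) w.
  split; [split|].
  - by exists s1 => //; rewrite alpha_rho.
  - by exists s2 => //; rewrite alpha_rho.
  - by rewrite /pball /= -/(pmetric w wb); lra.
have rho_delta : rho < delta by lra.
have [s [S1s S2s] /= ws] := S12_subtr rho0 rho_delta w_mem.
rewrite -/(pmetric w s) in ws.
have s_near : pmetric s wb < B.
  by apply: le_lt_trans (pmetric_le2 _ w _) _; rewrite pmetricC; lra.
have min_s := wb_min S1s S2s (lt_le_trans s_near Br0).
have w_rL : pmetric w wb < rL by lra.
have lip_s := phi_lip (lt_le_trans s_near BrL) w_rL.
have Lrho : L * pmetric s w <= L / alpha * c.
  by rewrite -alpha_rho mulrA divfK ?gt_eqF // ler_wpM2l // pmetricC.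
have := ler_norm (phi s.1 s.2 - phi w.1 w.2); lra.
Qed.

Hypotheses (S1wb : S1 wb) (S2wb : S2 wb).

Lemma penalty_bound_pdist (w : 'rV[R]_p * 'rV[R]_n) (a : R) : pmetric w wb < radius ->
  (pdist w S1 <= a%:E)%E -> (pdist w S2 <= a%:E)%E ->
  phi wb.1 wb.2 <= phi w.1 w.2 + L / alpha * a.
Proof.
move=> w_near wS1 wS2.
have a0 : 0 <= a by rewrite -lee_fin (le_trans (pdist_ge0 _ _) wS1).
(* [wb] lies in both sets, so the level [a] may be capped at [|w - wb| < radius],
   where subtransversality is available. *)
set c := Num.min a (pmetric w wb).
have [ca ct] : c <= a /\ c <= pmetric w wb by rewrite !ge_min !lexx orbT.
have c0 : 0 <= c by rewrite le_min a0 pmetric_ge0.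
have pdist_c S : S wb -> (pdist w S <= a%:E)%E -> (pdist w S <= c%:E)%E.
  move=> Swb wSa; rewrite /c minEle; case: ifP => // _.
  exact: pdist_le_pmetric.
have kappa0 : 0 <= L / alpha by rewrite divr_ge0 // ltW.
apply: (ler_add_scaled_eps (c := L / alpha) penalty_radius_gt0 kappa0).
move=> eta eta0 eta_small.
have [s1 S1s1 ws1] := pdist_le_witness (pdist_c _ S1wb wS1) eta0.
have [s2 S2s2 ws2] := pdist_le_witness (pdist_c _ S2wb wS2) eta0.
have ceta0 : 0 <= c + eta by lra.
have ceta_small : c + eta < 2 * penalty_radius by lra.
have := penalty_bound_near_points w_near ceta0 ceta_small S1s1 S2s2 (ltW ws1) (ltW ws2).
have : L / alpha * (c + eta) <= L / alpha * a + L / alpha * eta.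
  by rewrite -mulrDr ler_wpM2l // lerD2r.
lra.
Qed.

End ExactPenalty.

Lemma subtransversal_exact_penalty (R : realType) p n
    (S1 S2 : set ('rV[R]_p * 'rV[R]_n)) (phi : 'rV[R]_p -> 'rV[R]_n -> R) wb :
  S1 wb -> S2 wb -> local_minimizer_on (S1 `&` S2) phi wb ->
  locally_lipschitz phi wb -> subtransversal S1 S2 wb ->
  exists kappa r : R, [/\ 0 <= kappa, 0 < r & forall w a, pmetric w wb < r ->
    (pdist w S1 <= a%:E)%E -> (pdist w S2 <= a%:E)%E ->
    phi wb.1 wb.2 <= phi w.1 w.2 + kappa * a].
Proof.
move=> S1wb S2wb [r0 r00 wb_min] [L [rL [rL0 phi_lip]]] [alpha [delta [alpha0 [delta0 subtr]]]].
have L0 : 0 <= Num.max L 0 by rewrite le_max lexx orbT.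
have lip u v : pmetric u wb < rL -> pmetric v wb < rL ->
    `|phi u.1 u.2 - phi v.1 v.2| <= Num.max L 0 * pmetric u v.
  move=> uwb vwb; apply: le_trans (phi_lip u v uwb vwb) _.
  by rewrite ler_wpM2r ?pmetric_ge0 // le_max lexx.
exists (Num.max L 0 / alpha), (penalty_radius rL r0 alpha delta); split.
- by rewrite divr_ge0 // ltW.
- exact: penalty_radius_gt0.
- move=> w a; apply: penalty_bound_pdist => // s S1s S2s; exact: wb_min.
Qed.

Theorem mainTheorem8 (R : realType) (p n m : nat) (C : set 'rV[R]_m)
    (f : 'rV[R]_p -> 'rV[R]_n -> 'rV[R]_n -> 'rV[R]_m)
    (K : 'rV[R]_p -> set 'rV[R]_n)
    (phi : 'rV[R]_p -> 'rV[R]_n -> R) (Omega : set 'rV[R]_p)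
    (xib : 'rV[R]_p) (xb : 'rV[R]_n) :
  nontrivial_closed_convex_pointed_cone C ->
  pclosed (graph K) ->
  (forall xi, exists x, K xi x) ->
  eclosed Omega ->
  Omega xib -> VEPsol C f K xib xb ->
  (exists r : R, 0 < r /\ forall xi x, Omega xi -> VEPsol C f K xi x ->
      pnorm (xi - xib, x - xb) < r -> phi xib xb <= phi xi x) ->
  locally_lipschitz phi (xib, xb) ->
  pclosed (graph (VEPsol C f K)) ->
  subtransversal [set w | Omega w.1] (graph (VEPsol C f K)) (xib, xb) ->
  forall delta gamma : R, 0 < delta -> 0 < gamma ->
  (forall xi x, enorm (xi - xib) <= delta -> enorm (x - xb) <= delta ->
      (dist x (VEPsol C f K xi) <= merit C f K xi x * (gamma^-1)%:E)%E) ->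
  exists lambda : R, 0 < lambda /\
    exists r : R, 0 < r /\ forall xi x, pnorm (xi - xib, x - xb) < r ->
      ((phi xib xb)%:E + lambda%:E * (dist xib Omega + merit C f K xib xb * (gamma^-1)%:E)
        <= (phi xi x)%:E + lambda%:E * (dist xi Omega + merit C f K xi x * (gamma^-1)%:E))%E.
Proof.
move=> _ _ _ _ Oxib Exb [r0 [r00 xb_min]] phi_lip _ subtr delta gamma delta0 gamma0
  err_bound.
have local_min : local_minimizer_on ([set w | Omega w.1] `&` graph (VEPsol C f K))
    phi (xib, xb).
  by exists r0 => // s [Os Es]; apply: xb_min.
have [kappa [r [kappa0 r_gt0 penalty]]] :=
  subtransversal_exact_penalty (S1 := [set w | Omega w.1]) (wb := (xib, xb))
    Oxib Exb local_min phi_lip subtr.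
exists (kappa + 1); split; first lra.
exists (Num.min r delta); split; first by rewrite lt_min r_gt0 delta0.
move=> xi x; rewrite lt_min => /andP[near_r near_delta].
rewrite dist_mem // VEPsol_merit_eq0 // mul0e adde0 mule0 adde0.
have bound := err_bound xi x
  (le_trans (enorm_fst_le_pnorm _ (x - xb)) (ltW near_delta))
  (le_trans (enorm_snd_le_pnorm (xi - xib) _) (ltW near_delta)).
set D := (dist xi Omega + _)%E.
have D_fst : (dist xi Omega <= D)%E by apply: leeDl; apply: le_trans bound; exact: dist_ge0.
have D_snd : (dist x (VEPsol C f K xi) <= D)%E by apply: le_trans bound (leeDr _ _); exact: dist_ge0.
have D0 : (0 <= D)%E := le_trans (dist_ge0 _ _) D_fst.
clearbody D; case: D D_fst D_snd D0 => [d | | ] D_fst D_snd D0.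
- have := penalty (xi, x) d near_r (le_trans (pdist_fst_le _ _ _) D_fst)
    (le_trans (pdist_graph_le _ _ _) D_snd).
  rewrite -EFinM -EFinD lee_fin lee_fin in D0 *; nra.
- by rewrite gt0_muley ?lte_fin ?addey ?leey //; lra.
- by rewrite leeNy_eq in D0.
Qed.
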